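(* Let $q$ be a prime power, $n\ge 2$, and let $\mathcal{F}=(\mathcal{F}_1,\ldots,\mathcal{F}_r)$ be a flag of type $(t_1,\ldots,t_r)$ on $\mathbb{F}_{q^n}$. Let $\beta\in\mathbb{F}_{q^n}^*$. Then $|\mathrm{Orb}_{\beta}(\mathcal{F}_i)|$ divides $|\mathrm{Orb}_{\beta}(\mathcal{F})|$ for every $1\le i\le r$. In particular, $$\mathrm{lcm}\left\{ |\beta^{q^{t_i}-1}| \ : \ 1\le i\le r\right\} \text{ divides } |\mathrm{Orb}_{\beta}(\mathcal{F})|.$$
   Context: $\mathbb{F}_{q^n}$ is regarded as an $n$-dimensional $\mathbb{F}_q$-vector space. A flag of type $(t_1,\ldots,t_r)$ on $\mathbb{F}_{q^n}$ is a sequence $\mathcal{F}=(\mathcal{F}_1,\ldots,\mathcal{F}_r)$ of $\mathbb{F}_q$-subspaces with $\{0\}\subsetneq\mathcal{F}_1\subsetneq\cdots\subsetneq\mathcal{F}_r\subsetneq\mathbb{F}_{q^n}$ and $\dim_{\mathbb{F}_q}\mathcal{F}_i=t_i$. For $\beta\in\mathbb{F}_{q^n}^*$, $|\beta|$ denotes its multiplicative order; for an $\mathbb{F}_q$-subspace $\mathcal{U}$, $\mathcal{U}\beta=\{u\beta: u\in\mathcal{U}\}$ and $\mathcal{F}\beta=(\mathcal{F}_1\beta,\ldots,\mathcal{F}_r\beta)$. The $\beta$-cyclic orbit codes are $\mathrm{Orb}_\beta(\mathcal{U})=\{\mathcal{U}\beta^j: 0\le j\le|\beta|-1\}$ and $\mathrm{Orb}_\beta(\mathcal{F})=\{\mathcal{F}\beta^j: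 0\le j\le |\beta|-1\}$ (as sets). *)

(* F_q is a finite field F (q = #|F|), F_{q^n} is a field
   extension L : fieldExtType F with n = \dim {:L}; F_q-subspaces of F_{q^n}
   are {vspace L}. Elements of F_{q^n}^* are units u : {unit (finvect_type L)},
   whose multiplicative order is the group order #[u]%g. *)
From mathcomp Require Import all_boot all_order all_algebra all_fingroup all_field.
Set Implicit Arguments. Unset Strict Implicit. Unset Printing Implicit Defensive.
Import GRing.Theory.
Local Open Scope ring_scope.

Section Defs.
Variables (F : finFieldType) (L : fieldExtType F).

Definition vsmul (U : {vspace L}) (b : L) : {vspace L} := (amulr b @: U)%VS.

Definition is_flag (r : nat) (Fl : 'I_r -> {vspace L}) (t : 'I_r -> nat) : Prop :=
  [/\ forall i, \dim (Fl i) = t i,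
      forall i, Fl i != 0%VS,
      forall i, Fl i != fullv &
      forall i j : 'I_r, (i < j)%N -> (Fl i <= Fl j)%VS /\ Fl i != Fl j].

Definition flagmul (r : nat) (Fl : 'I_r -> {vspace L}) (b : L)
  : {ffun 'I_r -> {vspace L}} := [ffun i => vsmul (Fl i) b].

(* Orb_beta(U) = { U beta^j : 0 <= j <= |beta| - 1 } as a list; its
   cardinality (as a set) is the size of the duplicate-free list. *)
Definition orb_space (U : {vspace L}) (u : {unit (finvect_type L)}) : seq {vspace L} :=
  [seq vsmul U ((val u : L) ^+ j) | j <- iota 0 #[u]%g].

Definition orb_flag (r : nat) (Fl : 'I_r -> {vspace L}) (u : {unit (finvect_type L)})
  : seq {ffun 'I_r -> {vspace L}} :=
  [seq flagmul Fl ((val u : L) ^+ j) | j <- iota 0 #[u]%g].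

Definition card_orb_space U u : nat := size (undup (orb_space U u)).
Definition card_orb_flag r Fl u : nat := size (undup (@orb_flag r Fl u)).

End Defs.

From mathcomp Require Import all_boot all_order all_algebra all_fingroup all_field.
From mathcomp Require Import cyclic.
Set Implicit Arguments. Unset Strict Implicit. Unset Printing Implicit Defensive.
Import GRing.Theory FinRing.Theory.
Local Open Scope ring_scope.

(* Multiplication by the powers of beta acts on subspaces and on flags, and
   each beta^j acts injectively, so j |-> X beta^j is purely periodic: the
   orbit size of X is its least period d_X, and X beta^i = X beta^j iff
   i = j mod d_X. A period of the flag is a period of each F_i, which gives
   the first divisibility. Moreover beta^(d_U) stabilises U, so the cyclic
   group it generates acts freely on the q^t - 1 nonzero vectors of U; thus
   |beta^(d_U)| divides q^t - 1, i.e. |beta^(q^t - 1)| divides d_U. *)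

Section LeastPeriod.
Variables (T : eqType) (f : nat -> T) (N : nat).
Hypotheses (N_gt0 : (0 < N)%N) (fN : f N = f 0)
  (f_shift : forall i j k, f (i + k)%N = f (j + k)%N <-> f i = f j).

Section Period.
Variable d : nat.
Hypotheses (d_gt0 : (0 < d)%N) (fd : f d = f 0)
  (d_min : forall p, (0 < p)%N -> f p = f 0 -> (d <= p)%N).

Lemma f_mod_period i : f (i %% d)%N = f i.
Proof.
rewrite {2}(divn_eq i d); elim: (i %/ d)%N => [|m IHm]; first by rewrite add0n.
by rewrite IHm mulSn -addnA (proj2 (f_shift d 0 _) fd) add0n.
Qed.

Lemma f_inj_lt_period a b : (a < d)%N -> (b < d)%N -> f a = f b -> a = b.
Proof.
wlog ab : a b / (a <= b)%N.
  move=> wlog_ab ad bd fab; case/orP: (leq_total a b) => le_ab; first exact: wlog_ab.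
  exact/esym/wlog_ab.
move=> _ bd fab; apply/eqP; rewrite eqn_leq ab leqNgt -subn_gt0; apply/negP => ba_gt0.
have f_ba : f (b - a)%N = f 0 by apply/(f_shift _ _ a); rewrite subnK.
by have := d_min ba_gt0 f_ba; rewrite leqNgt (leq_ltn_trans (leq_subr a b) bd).
Qed.

Lemma f_eq_mod_period i j : f i = f j <-> i = j %[mod d].
Proof.
split=> [fij | eq_ij]; last by rewrite -f_mod_period eq_ij f_mod_period.
by apply: f_inj_lt_period; rewrite ?ltn_pmod ?f_mod_period.
Qed.

Lemma size_undup_period : size (undup [seq f j | j <- iota 0 N]) = d.
Proof.
have dN : (d <= N)%N by apply: d_min.
rewrite -[d](size_iota 0) -(size_map f); apply/perm_size/uniq_perm.
- exact: undup_uniq.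
- rewrite map_inj_in_uniq ?iota_uniq // => a b.
  by rewrite !mem_iota !add0n; apply: f_inj_lt_period.
move=> x; rewrite mem_undup; apply/mapP/mapP => [[j _ ->]|[j]].
  by exists (j %% d)%N; rewrite ?f_mod_period // mem_iota ltn_pmod.
rewrite !mem_iota add0n => jd ->; exists j => //.
by rewrite mem_iota add0n (leq_trans jd dN).
Qed.

End Period.

Lemma eq_mod_size_undup i j :
  f i = f j <-> i = j %[mod size (undup [seq f j | j <- iota 0 N])].
Proof.
have exP : exists p, (0 < p)%N && (f p == f 0) by exists N; rewrite N_gt0 fN eqxx.
case: (ex_minnP exP) => d /andP[d_gt0 /eqP fd] d_min.
have {}d_min p : (0 < p)%N -> f p = f 0 -> (d <= p)%N.
  by move=> p_gt0 fp; apply: d_min; rewrite p_gt0 fp eqxx.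
rewrite (size_undup_period d_gt0 fd d_min); exact: f_eq_mod_period.
Qed.

End LeastPeriod.

Lemma dvdn_cardG_acts_regular (gT : finGroupType) (H : {group gT}) (A : {set gT}) :
  [acts H, on A | 'R] -> (#|H| %| #|A|)%N.
Proof.
move=> actsHA; have partA := orbit_partition actsHA.
rewrite (@card_uniform_partition _ #|H| _ _ _ partA) ?dvdn_mull //.
by move=> _ /imsetP[x _ ->]; rewrite orbitR card_lcoset.
Qed.

Section Multiplication.
Variables (F : finFieldType) (L : fieldExtType F).

Lemma vsmulM (U : {vspace L}) x y : vsmul U (x * y) = vsmul (vsmul U x) y.
Proof.
rewrite /vsmul -limg_comp; congr (_ @: _)%VS; apply/lfunP => v.
by rewrite comp_lfunE !lfunE /= mulrA.
Qed.

Lemma vsmul1 (U : {vspace L}) : vsmul U 1 = U.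
Proof.
rewrite /vsmul -[RHS]lim1g; congr (_ @: _)%VS; apply/lfunP => v.
by rewrite !lfunE /= mulr1.
Qed.

Lemma mem_vsmul (U : {vspace L}) x c : x \in U -> x * c \in vsmul U c.
Proof. by move/(memv_img (amulr c)); rewrite lfunE. Qed.

Lemma flagmulM r (Fl : 'I_r -> {vspace L}) x y :
  flagmul Fl (x * y) = flagmul (flagmul Fl x) y.
Proof. by apply/ffunP => i; rewrite !ffunE vsmulM. Qed.

Lemma flagmul1 r (Fl : {ffun 'I_r -> {vspace L}}) : flagmul Fl 1 = Fl.
Proof. by apply/ffunP => i; rewrite ffunE vsmul1. Qed.

End Multiplication.

Section OrbitPeriod.
Variables (F : finFieldType) (L : fieldExtType F) (T : eqType) (act : T -> L -> T).
Hypotheses (act1 : forall x, act x 1 = x)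
  (actM : forall x a b, act x (a * b) = act (act x a) b).
Variables (u : {unit (finvect_type L)}) (f : nat -> T).
Hypothesis f_shift : forall j k, f (j + k)%N = act (f j) ((val u : L) ^+ k).

Lemma act_inj c : c != 0 -> injective (act^~ c).
Proof. by move=> c_neq0 x y /(congr1 (act^~ c^-1)); rewrite -!actM divff // !act1. Qed.

Lemma orbit_eq_mod i j :
  f i = f j <-> i = j %[mod size (undup [seq f j | j <- iota 0 #[u]%g])].
Proof.
have b_neq0 : (val u : L) != 0 by rewrite -unitfE (valP u).
apply: eq_mod_size_undup => [|| {}i {}j k]; first exact: order_gt0.
  rewrite -[#[u]%g]add0n f_shift.
  by have := val_unitX #[u]%g u; rewrite expg_order => <-; rewrite act1.
rewrite !f_shift; split=> [|-> //]; exact/act_inj/expf_neq0.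
Qed.

End OrbitPeriod.

Section UnitsInSubspace.
Variables (F : finFieldType) (L : fieldExtType F) (U : {vspace L}).
Local Notation units_in U := [set v : {unit (finvect_type L)} | val v \in U].

Lemma card_units_in_vspace : #|units_in U| = (#|F| ^ \dim U).-1.
Proof.
rewrite -(@card_vspace F (finvect_type L)) (cardD1 0) mem0v add1n /=.
rewrite -(card_imset _ val_inj); apply: eq_card => x; rewrite [RHS]inE.
apply/imsetP/andP => [[v vU ->] | [x_neq0 xU]].
  by rewrite inE in vU; rewrite -unitfE (valP v).
have x_unit : x \is a GRing.unit by rewrite unitfE.
by exists (FinRing.unit _ x_unit); rewrite ?inE.
Qed.

Lemma order_dvdn_of_vsmul_fixed (g : {unit (finvect_type L)}) :
  vsmul U (val g) = U -> (#[g]%g %| (#|F| ^ \dim U).-1)%N.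
Proof.
move=> gU; rewrite -card_units_in_vspace; apply: dvdn_cardG_acts_regular.
rewrite cycle_subG; apply/astabsP => x; rewrite !inE val_unitM.
have g_neq0 : val g != 0 by rewrite -unitfE (valP g).
apply/idP/idP => [xgU | xU]; last by rewrite -gU mem_vsmul.
have giU : vsmul U (val g)^-1 = U by rewrite -{1}gU -vsmulM divff ?vsmul1.
by rewrite -(mulfK g_neq0 (val x)) -giU mem_vsmul.
Qed.

End UnitsInSubspace.

Section CyclicOrbits.
Variables (F : finFieldType) (L : fieldExtType F) (u : {unit (finvect_type L)}).
Local Notation b := (val u : L).

Lemma vsmul_orbit_eq_mod (U : {vspace L}) i j :
  vsmul U (b ^+ i) = vsmul U (b ^+ j) <-> i = j %[mod card_orb_space U u].
Proof.
by apply: (orbit_eq_mod (@vsmul1 _ L) (@vsmulM _ L)) => k l; rewrite exprD vsmulM.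
Qed.

Lemma flagmul_orbit_eq_mod r (Fl : 'I_r -> {vspace L}) i j :
  flagmul Fl (b ^+ i) = flagmul Fl (b ^+ j) <-> i = j %[mod card_orb_flag Fl u].
Proof.
pose act (G : {ffun 'I_r -> {vspace L}}) c := flagmul G c.
apply: (orbit_eq_mod (act := act) (@flagmul1 _ L r) (fun G => flagmulM G)) => k l.
by rewrite exprD flagmulM.
Qed.

Lemma card_orb_space_dvd_flag r (Fl : 'I_r -> {vspace L}) i :
  (card_orb_space (Fl i) u %| card_orb_flag Fl u)%N.
Proof.
set d := card_orb_flag Fl u.
have /ffunP/(_ i) : flagmul Fl (b ^+ d) = flagmul Fl (b ^+ 0).
  by apply/flagmul_orbit_eq_mod; rewrite modnn mod0n.
by rewrite !ffunE => /vsmul_orbit_eq_mod; rewrite mod0n => /eqP.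
Qed.

Lemma order_dvdn_card_orb_space (U : {vspace L}) :
  (#[u ^+ (#|F| ^ \dim U - 1)]%g %| card_orb_space U u)%N.
Proof.
set e := card_orb_space U u.
have ueU : vsmul U (val (u ^+ e)%g) = U.
  have := proj2 (vsmul_orbit_eq_mod U e 0); rewrite modnn mod0n expr0 vsmul1.
  by rewrite val_unitX; apply.
rewrite order_dvdn -expgM mulnC expgM -order_dvdn subn1.
exact: order_dvdn_of_vsmul_fixed.
Qed.

End CyclicOrbits.

Theorem proposition3p5 (F : finFieldType) (L : fieldExtType F)
  (hn : (2 <= \dim {:L})%N)
  (r : nat) (Fl : 'I_r -> {vspace L}) (t : 'I_r -> nat)
  (hflag : is_flag Fl t)
  (u : {unit (finvect_type L)}) :
  (forall i : 'I_r, (card_orb_space (Fl i) u %| card_orb_flag Fl u)%N) /\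
  (\big[lcmn/1%N]_(i < r) #[u ^+ (#|F| ^ t i - 1)]%g %| card_orb_flag Fl u)%N.
Proof.
case: hflag => dimFl _ _ _.
split=> [i | ]; first exact: card_orb_space_dvd_flag.
apply/dvdn_biglcmP => i _; rewrite -dimFl.
exact: dvdn_trans (order_dvdn_card_orb_space _ _) (card_orb_space_dvd_flag _ _ _).
Qed.
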